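(* Let $E_1\subset\mathbb{R}^n$ be a closed Euclidean ball with center $c$ and radius $R>0$, and let $\mathcal{Y}_*\subset E_1$ be a convex set containing a Euclidean ball $\{y:\|y-y_*\|_2\leq\rho_*\}$ of radius $\rho_*>0$. Consider an oracle which, when queried at a point $y\in\mathbb{R}^n$, either returns nothing (''gets stuck'') or returns an affine function $f:\mathbb{R}^n\to\mathbb{R}$ with $\|\nabla f\|_2=1$, $f(y)\geq 0$ and $f(z)\leq 0$ for all $z\in\mathcal{Y}_*$ (a ''separator''). The Bundle-Level (BL) algorithm queries the oracle at points $y^1,y^2,\dots$ defined as follows: $y^1=c$; if at steps $1,\dots,s-1$ the oracle returned separators $f_1,\dots,f_{s-1}$, set $f^{s-1}(y)=\max_{r<s}f_r(y)$, $\Delta_{s-1}=\min_{y\in E_1}f^{s-1}(y)$, and $$y^s=\mathrm{argmin}_y\Big\{\|y^{s-1}-y\|_2:\ y\in E_1,\ f^{s-1}(y)\leq \tfrac12\Delta_{s-1}\Big\};$$ the algorithm terminates at the first step at which the oracle returns nothing. Then for every $s\geq 1$ such that the oracle returned separators at steps $1,\dots,s$, one has $\Delta_s\leq-\rho_*$ (in particular all points $y^s$ are well defined). Moreover, if the oracle returned separators at each of the steps $1,\dots,S$, then $S\leq 32R^2/\rho_*^2$; hence BL terminates after at most $32R^2/\rho_*^2+1$ steps. *)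

From Stdlib Require Vectors.Fin.
From Stdlib Require Import Reals Lra.
Open Scope R_scope.

Definition vec (n : nat) := Fin.t n -> R.

Fixpoint vsum (n : nat) : (Fin.t n -> R) -> R :=
  match n with
  | O => fun _ => 0
  | S m => fun f => f Fin.F1 + vsum m (fun i => f (Fin.FS i))
  end.

Definition dot {n} (u v : vec n) : R := vsum n (fun i => u i * v i).
Definition norm2 {n} (u : vec n) : R := sqrt (dot u u).
Definition vsub {n} (u v : vec n) : vec n := fun i => u i - v i.
Definition dist {n} (u v : vec n) : R := norm2 (vsub u v).

Definition cball {n} (c : vec n) (r : R) (y : vec n) : Prop := dist y c <= r.

Definition convex {n} (C : vec n -> Prop) : Prop :=
  forall x y (t : R), C x -> C y -> 0 <= t <= 1 ->
    C (fun i => t * x i + (1 - t) * y i).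

(* affine function f(y) = <g, y> + b ; its gradient is g *)
Definition aff {n} (g : vec n) (b : R) (y : vec n) : R := dot g y + b.

Definition separator {n} (Ys : vec n -> Prop) (y g : vec n) (b : R) : Prop :=
  norm2 g = 1 /\ aff g b y >= 0 /\ (forall z, Ys z -> aff g b z <= 0).

(* f^s(y) = max_{1 <= r <= s} f_r(y)   (meaningful for s >= 1) *)
Fixpoint fmax {n} (g : nat -> vec n) (b : nat -> R) (s : nat) (y : vec n) : R :=
  match s with
  | O => aff (g 1%nat) (b 1%nat) y
  | S O => aff (g 1%nat) (b 1%nat) y
  | S s' => Rmax (fmax g b s' y) (aff (g s) (b s) y)
  end.

Definition is_min_val {n} (E : vec n -> Prop) (F : vec n -> R) (d : R) : Prop :=
  (exists y, E y /\ F y = d) /\ (forall y, E y -> d <= F y).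

Definition is_closest {n} (C : vec n -> Prop) (q p : vec n) : Prop :=
  C p /\ (forall z, C z -> dist q p <= dist q z).

Definition level_set {n} (c : vec n) (Rad : R) (F : vec n -> R) (d : R) (y : vec n) : Prop :=
  cball c Rad y /\ F y <= d / 2.

Definition BL_step {n} (c : vec n) (Rad : R) (F : vec n -> R) (yprev ynew : vec n) : Prop :=
  exists d, is_min_val (cball c Rad) F d /\ is_closest (level_set c Rad F d) yprev ynew.

(* A run of BL in which the oracle returned separators (g s, b s) at steps 1..S
   (the oracle may be arbitrary, even adaptive: only its answers matter). *)
Definition BL_run {n} (c : vec n) (Rad : R) (Ys : vec n -> Prop)
  (y g : nat -> vec n) (b : nat -> R) (S : nat) : Prop :=
  y 1%nat = c /\
  (forall s, (1 <= s <= S)%nat -> separator Ys (y s) (g s) (b s)) /\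
  (forall s, (2 <= s <= S)%nat -> BL_step c Rad (fmax g b (s - 1)) (y (s - 1)%nat) (y s)).

(* The levels Delta_s are nondecreasing and lie in [-R, -rho]: f^s >= f_1 with
   f_1(c) >= 0 and f_1 1-Lipschitz, while every f_r is <= -rho at y_*, because f_r
   has unit gradient and is <= 0 on the ball of radius rho around y_*.  The point
   y^{s+1} is the projection of y^s onto the convex level set
   L_s = {y in E_1 : f^s(y) <= Delta_s/2}, and f_s(y^s) >= 0 >= Delta_s/2 >= f_s(y^{s+1})
   forces ||y^s - y^{s+1}|| >= |Delta_s|/2.  If Delta_T <= Delta_t/2, a minimiser x of
   f^T lies in L_t, ..., L_{T-1}, so by the Pythagoras inequality for projections
   ||y^s - x||^2 drops by at least Delta_T^2/4 per step: (T - t) Delta_T^2 <= 16 R^2.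
   Cutting 1..T where |Delta| stops being within a factor 2 of |Delta_T| and inducting
   gives T Delta_T^2 <= 32 R^2, and Delta_T <= -rho concludes.  Minima and projections
   exist by completeness of R^n; projections onto convex sets are unique. *)

From Stdlib Require Import Reals Lra Lia Psatz Wf_nat.
From Stdlib Require Import FunctionalExtensionality ClassicalEpsilon IndefiniteDescription.
Open Scope R_scope.

Lemma vsum_ext n (f h : Fin.t n -> R) : (forall i, f i = h i) -> vsum n f = vsum n h.
Proof.
  revert f h; induction n as [|n IH]; intros f h H; simpl; [reflexivity|].
  rewrite H, (IH _ (fun i => h (Fin.FS i))); [reflexivity|intros; apply H].
Qed.

Lemma vsum_lincomb3 n (F f1 f2 f3 : Fin.t n -> R) a1 a2 a3 :
  (forall i, F i = a1 * f1 i + a2 * f2 i + a3 * f3 i) ->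
  vsum n F = a1 * vsum n f1 + a2 * vsum n f2 + a3 * vsum n f3.
Proof.
  revert F f1 f2 f3; induction n as [|n IH]; intros F f1 f2 f3 H; simpl; [ring|].
  rewrite H, (IH (fun i => F (Fin.FS i)) (fun i => f1 (Fin.FS i))
                 (fun i => f2 (Fin.FS i)) (fun i => f3 (Fin.FS i))); [ring|].
  intros; apply H.
Qed.

Lemma vsum_le n (f h : Fin.t n -> R) : (forall i, f i <= h i) -> vsum n f <= vsum n h.
Proof.
  revert f h; induction n as [|n IH]; intros f h H; simpl; [lra|].
  pose proof (H Fin.F1); pose proof (IH _ (fun i => h (Fin.FS i)) (fun i => H _)); lra.
Qed.

Lemma vsum_const n a : vsum n (fun _ => a) = INR n * a.
Proof. induction n as [|n IH]; simpl vsum; [simpl; ring|]. rewrite IH, S_INR; ring. Qed.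

Lemma vsum_nonneg n (f : Fin.t n -> R) : (forall i, 0 <= f i) -> 0 <= vsum n f.
Proof.
  intros Hf. pose proof (vsum_le n (fun _ => 0) f Hf) as H.
  rewrite vsum_const, Rmult_0_r in H. exact H.
Qed.

Lemma vsum_ge_term n (f : Fin.t n -> R) i : (forall j, 0 <= f j) -> f i <= vsum n f.
Proof.
  induction i as [m|m i IH]; intros Hf; simpl.
  - pose proof (vsum_nonneg m (fun j => f (Fin.FS j)) (fun j => Hf _)); lra.
  - pose proof (IH (fun j => f (Fin.FS j)) (fun j => Hf _)); pose proof (Hf Fin.F1); lra.
Qed.

Definition sqnorm {n} (u : vec n) : R := dot u u.

Lemma sqnorm_nonneg {n} (u : vec n) : 0 <= sqnorm u.
Proof. apply vsum_nonneg; intros; nra. Qed.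

Lemma sqnorm_ge_coord {n} (u : vec n) i : u i * u i <= sqnorm u.
Proof. apply (vsum_ge_term n (fun i => u i * u i)); intros; nra. Qed.

Lemma norm2_sq {n} (u : vec n) : norm2 u * norm2 u = sqnorm u.
Proof. apply sqrt_sqrt, sqnorm_nonneg. Qed.

Lemma norm2_ext {n} (u v : vec n) : (forall i, u i = v i) -> norm2 u = norm2 v.
Proof. intros H; unfold norm2, dot; f_equal; apply vsum_ext; intros; rewrite H; ring. Qed.

Lemma norm2_scale {n} (u : vec n) t : 0 <= t -> norm2 (fun i => t * u i) = t * norm2 u.
Proof.
  intros Ht. unfold norm2, dot.
  rewrite (vsum_lincomb3 n _ (fun i => u i * u i) (fun i => u i * u i) (fun i => u i * u i)
             (t * t) 0 0) by (intros; ring).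
  rewrite !Rmult_0_l, !Rplus_0_r, sqrt_mult_alt, sqrt_square by nra. reflexivity.
Qed.

Lemma sqrt_le_of_le_sq x y : 0 <= y -> x <= y * y -> sqrt x <= y.
Proof. intros Hy H. rewrite <- (sqrt_square y Hy). apply sqrt_le_1_alt; lra. Qed.

Lemma quadratic_nonneg_discr A B C : 0 <= A -> 0 <= C ->
  (forall t, 0 <= A - 2 * t * B + t * t * C) -> B * B <= A * C.
Proof.
  intros HA HC H. destruct (Req_dec C 0) as [H0|H0].
  - subst. destruct (Req_dec B 0) as [HB|HB]; [subst; lra|].
    specialize (H ((A + 1) / (2 * B))).
    replace (A - 2 * ((A + 1) / (2 * B)) * B + (A + 1) / (2 * B) * ((A + 1) / (2 * B)) * 0)
      with (-1) in H by (field; auto). lra.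
  - specialize (H (B / C)).
    replace (A - 2 * (B / C) * B + B / C * (B / C) * C) with ((A * C - B * B) / C) in H
      by (field; auto).
    assert (0 < C) by lra.
    enough (0 <= A * C - B * B) by lra.
    replace (A * C - B * B) with ((A * C - B * B) / C * C) by (field; auto). nra.
Qed.

Lemma cauchy_schwarz {n} (u v : vec n) : dot u v <= norm2 u * norm2 v.
Proof.
  assert (Hq : forall t, 0 <= sqnorm u - 2 * t * dot u v + t * t * sqnorm v).
  { intros t. pose proof (sqnorm_nonneg (fun i => u i - t * v i)) as H.
    unfold sqnorm, dot in *.
    rewrite (vsum_lincomb3 n _ (fun i => u i * u i) (fun i => u i * v i) (fun i => v i * v i)
               1 (-2 * t) (t * t)) in H by (intros; ring). lra. }
  pose proof (quadratic_nonneg_discr _ _ _ (sqnorm_nonneg u) (sqnorm_nonneg v) Hq).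
  pose proof (sqrt_pos (dot u u)); pose proof (sqrt_pos (dot v v)).
  destruct (Rle_dec (dot u v) 0); [unfold norm2; nra|].
  unfold norm2. rewrite <- sqrt_mult_alt by apply sqnorm_nonneg.
  rewrite <- (sqrt_square (dot u v)) by lra. apply sqrt_le_1_alt. assumption.
Qed.

Lemma norm2_triangle {n} (u v : vec n) : norm2 (fun i => u i + v i) <= norm2 u + norm2 v.
Proof.
  pose proof (sqrt_pos (dot u u)); pose proof (sqrt_pos (dot v v)).
  apply sqrt_le_of_le_sq; [unfold norm2; lra|].
  pose proof (cauchy_schwarz u v); pose proof (norm2_sq u); pose proof (norm2_sq v).
  unfold sqnorm, dot in *.
  rewrite (vsum_lincomb3 n _ (fun i => u i * u i) (fun i => u i * v i) (fun i => v i * v i)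
             1 2 1) by (intros; ring).
  nra.
Qed.

Lemma dist_sym {n} (u v : vec n) : dist u v = dist v u.
Proof. unfold dist, norm2, dot, vsub; f_equal; apply vsum_ext; intros; ring. Qed.

Lemma dist_nonneg {n} (u v : vec n) : 0 <= dist u v.
Proof. apply sqrt_pos. Qed.

Lemma dist_sq {n} (u v : vec n) : dist u v * dist u v = sqnorm (vsub u v).
Proof. apply norm2_sq. Qed.

Lemma dist_le_sq {n} (q p z : vec n) :
  dist q p <= dist q z -> sqnorm (vsub q p) <= sqnorm (vsub q z).
Proof. intros H. rewrite <- !dist_sq. pose proof (dist_nonneg q p). nra. Qed.

Lemma dist_self {n} (u : vec n) : dist u u = 0.
Proof.
  unfold dist, norm2, dot, vsub.
  rewrite (vsum_ext n _ (fun _ => 0)) by (intros; ring).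
  rewrite vsum_const, Rmult_0_r. apply sqrt_0.
Qed.

Lemma dist_triangle {n} (x y z : vec n) : dist x z <= dist x y + dist y z.
Proof.
  unfold dist. rewrite (norm2_ext (vsub x z) (fun i => vsub x y i + vsub y z i))
    by (intros; unfold vsub; ring).
  apply norm2_triangle.
Qed.

Lemma cball_center {n} (c : vec n) r : 0 <= r -> cball c r c.
Proof. intros Hr. unfold cball. rewrite dist_self. exact Hr. Qed.

Lemma cball_sqdist {n} (c u v : vec n) r :
  cball c r u -> cball c r v -> sqnorm (vsub u v) <= 4 * (r * r).
Proof.
  unfold cball; intros Hu Hv. rewrite <- dist_sq.
  pose proof (dist_triangle u c v). rewrite (dist_sym c v) in H.
  pose proof (dist_nonneg u v). nra.
Qed.

Definition comb {n} (t : R) (x y : vec n) : vec n := fun i => t * x i + (1 - t) * y i.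

Lemma dist_comb {n} (x y c : vec n) t : 0 <= t <= 1 ->
  dist (comb t x y) c <= t * dist x c + (1 - t) * dist y c.
Proof.
  intros Ht. unfold dist.
  rewrite (norm2_ext (vsub (comb t x y) c)
             (fun i => (fun i => t * vsub x c i) i + (fun i => (1 - t) * vsub y c i) i))
    by (intros; unfold vsub, comb; ring).
  eapply Rle_trans; [apply norm2_triangle|]. rewrite !norm2_scale by lra. lra.
Qed.

Lemma aff_sub {n} (g x y : vec n) b : aff g b x - aff g b y = dot g (vsub x y).
Proof.
  unfold aff, dot, vsub.
  rewrite (vsum_lincomb3 n (fun i => g i * (x i - y i)) (fun i => g i * x i)
             (fun i => g i * y i) (fun i => g i * y i) 1 (-1) 0) by (intros; ring).
  ring.
Qed.

Lemma aff_comb {n} (g x y : vec n) b t :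
  aff g b (comb t x y) = t * aff g b x + (1 - t) * aff g b y.
Proof.
  unfold aff, dot, comb.
  rewrite (vsum_lincomb3 n _ (fun i => g i * x i) (fun i => g i * y i) (fun i => g i * y i)
             t (1 - t) 0) by (intros; ring).
  ring.
Qed.

Definition lipschitz1 {n} (F : vec n -> R) : Prop := forall x y, F x <= F y + dist x y.

Definition convex_fun {n} (F : vec n -> R) : Prop :=
  forall x y t, 0 <= t <= 1 -> F (comb t x y) <= t * F x + (1 - t) * F y.

Lemma aff_lipschitz {n} (g : vec n) b : norm2 g = 1 -> lipschitz1 (aff g b).
Proof.
  intros Hg x y. pose proof (aff_sub g x y b). pose proof (cauchy_schwarz g (vsub x y)).
  unfold dist. rewrite Hg in H0. lra.
Qed.

Lemma aff_convex {n} (g : vec n) b : convex_fun (aff g b).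
Proof. intros x y t _. rewrite aff_comb. lra. Qed.

(* Moving from the centre by [rho] along the gradient raises [aff g b] by exactly [rho]. *)
Lemma aff_nonpos_ball_center {n} (g ys : vec n) b rho : 0 < rho -> norm2 g = 1 ->
  (forall z, cball ys rho z -> aff g b z <= 0) -> aff g b ys <= - rho.
Proof.
  intros Hr Hg H. set (z := fun i => ys i + rho * g i).
  assert (Hz : cball ys rho z).
  { unfold cball, dist.
    rewrite (norm2_ext (vsub z ys) (fun i => rho * g i)) by (intros; unfold vsub, z; ring).
    rewrite norm2_scale, Hg by lra. lra. }
  assert (Hstep : dot g (vsub z ys) = rho * sqnorm g).
  { unfold sqnorm, dot, vsub, z.
    rewrite (vsum_lincomb3 n _ (fun i => g i * g i) (fun i => g i * g i) (fun i => g i * g i)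
               rho 0 0) by (intros; ring).
    ring. }
  rewrite <- norm2_sq, Hg in Hstep.
  pose proof (H z Hz). pose proof (aff_sub g z ys b). lra.
Qed.

Section ModelFunction.
Context {n : nat} (g : nat -> vec n) (b : nat -> R).

Lemma fmax_S s y : fmax g b (S s) y = Rmax (fmax g b s y) (aff (g (S s)) (b (S s)) y).
Proof. destruct s; [|reflexivity]. simpl fmax. unfold Rmax; destruct Rle_dec; reflexivity. Qed.

Lemma fmax_mono s s' y : (s <= s')%nat -> fmax g b s y <= fmax g b s' y.
Proof. induction 1; [lra|]. rewrite fmax_S. eapply Rle_trans; [eassumption|apply Rmax_l]. Qed.

Lemma aff_le_fmax r s y : (1 <= r <= s)%nat -> aff (g r) (b r) y <= fmax g b s y.
Proof.
  induction s as [|s IH]; intros H; [lia|]. rewrite fmax_S.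
  destruct (Nat.eq_dec r (S s)) as [->|Hne]; [apply Rmax_r|].
  eapply Rle_trans; [apply IH; lia|apply Rmax_l].
Qed.

Lemma fmax_le s y v : (1 <= s)%nat ->
  (forall r, (1 <= r <= s)%nat -> aff (g r) (b r) y <= v) -> fmax g b s y <= v.
Proof.
  induction s as [|s IH]; intros Hs H; [lia|]. rewrite fmax_S. apply Rmax_lub; [|apply H; lia].
  destruct s; [apply H; lia|]. apply IH; [lia|]. intros; apply H; lia.
Qed.

Lemma fmax_convex s : convex_fun (fmax g b s).
Proof.
  intros x y t Ht. induction s as [|s IH]; [apply aff_convex; exact Ht|].
  rewrite !fmax_S. pose proof (aff_convex (g (S s)) (b (S s)) x y t Ht).
  pose proof (Rmax_l (fmax g b s x) (aff (g (S s)) (b (S s)) x)).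
  pose proof (Rmax_r (fmax g b s x) (aff (g (S s)) (b (S s)) x)).
  pose proof (Rmax_l (fmax g b s y) (aff (g (S s)) (b (S s)) y)).
  pose proof (Rmax_r (fmax g b s y) (aff (g (S s)) (b (S s)) y)).
  apply Rmax_lub; nra.
Qed.

Lemma fmax_lipschitz s : (1 <= s)%nat ->
  (forall r, (1 <= r <= s)%nat -> norm2 (g r) = 1) -> lipschitz1 (fmax g b s).
Proof.
  intros Hs Hg x y. apply fmax_le; [exact Hs|]. intros r Hr.
  pose proof (aff_lipschitz (g r) (b r) (Hg r Hr) x y). pose proof (aff_le_fmax r s y Hr). lra.
Qed.

End ModelFunction.

Lemma inf_approx (P : R -> Prop) B : (exists x, P x) -> (forall x, P x -> B <= x) ->
  exists m, (forall x, P x -> m <= x) /\ (forall eps, 0 < eps -> exists x, P x /\ x < m + eps).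
Proof.
  intros [x0 Hx0] HB.
  destruct (completeness (fun x => P (- x))) as [L [HL1 HL2]].
  - exists (- B). intros x Hx. specialize (HB _ Hx). lra.
  - exists (- x0). rewrite Ropp_involutive. exact Hx0.
  - exists (- L). split.
    + intros x Hx. enough (- x <= L) by lra. apply HL1. rewrite Ropp_involutive. exact Hx.
    + intros eps Heps. apply NNPP. intros Hnone.
      enough (L <= L - eps) by lra. apply HL2. intros x Hx.
      destruct (Rle_dec x (L - eps)) as [|Hgt]; [assumption|].
      exfalso. apply Hnone. exists (- x). split; [exact Hx|lra].
Qed.

Lemma inv_succ_small C a : 0 <= C -> 0 < a ->
  exists N, forall k, (N <= k)%nat -> C * / (INR k + 1) <= a.
Proof.
  intros HC Ha. destruct (archimed_cor1 (a / (C + 1))) as [N [HN HN0]].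
  { apply Rdiv_lt_0_compat; lra. }
  exists N. intros k Hk.
  assert (HNk : INR N <= INR k) by (apply le_INR; exact Hk).
  assert (0 < INR N) by (apply lt_0_INR; exact HN0).
  assert (/ (INR k + 1) <= / INR N) by (apply Rinv_le_contravar; lra).
  assert (HCa : (C + 1) * / INR N <= a).
  { apply Rlt_le. apply (Rmult_lt_compat_l (C + 1)) in HN; [|lra].
    replace ((C + 1) * (a / (C + 1))) with a in HN by (field; lra). exact HN. }
  assert (0 < / (INR k + 1)) by (apply Rinv_0_lt_compat; lra).
  nra.
Qed.

Lemma inv_succ_bounds k l : (k <= l)%nat ->
  0 < / (INR l + 1) /\ / (INR l + 1) <= / (INR k + 1) /\ / (INR k + 1) <= 1.
Proof.
  intros Hkl. assert (INR k <= INR l) by (apply le_INR; exact Hkl). pose proof (pos_INR k).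
  repeat split.
  - apply Rinv_0_lt_compat; lra.
  - apply Rinv_le_contravar; lra.
  - rewrite <- Rinv_1. apply Rinv_le_contravar; lra.
Qed.

Definition converges {n} (z : nat -> vec n) (p : vec n) : Prop :=
  forall eps, 0 < eps -> exists N, forall k, (N <= k)%nat -> dist (z k) p <= eps.

Definition closed_set {n} (C : vec n -> Prop) : Prop :=
  forall x, (forall eps, 0 < eps -> exists u, C u /\ dist u x <= eps) -> C x.

Lemma closed_set_limit {n} (C : vec n -> Prop) z p : closed_set C ->
  (exists N, forall k, (N <= k)%nat -> C (z k)) -> converges z p -> C p.
Proof.
  intros HC [N HN] Hz. apply HC. intros eps Heps. destruct (Hz eps Heps) as [M HM].
  exists (z (max N M)). split; [apply HN|apply HM]; lia.
Qed.

Lemma coord_le_of_sqnorm {n} (u : vec n) i e : 0 <= e -> sqnorm u <= e * e -> Rabs (u i) <= e.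
Proof.
  intros He H. rewrite <- (Rabs_pos_eq e He). apply Rsqr_le_abs_0. unfold Rsqr.
  pose proof (sqnorm_ge_coord u i). lra.
Qed.

(* The modulus is on squared distances, which is what the parallelogram law and
   the Pythagoras inequality for projections deliver. *)
Lemma cauchy_converges {n} (z : nat -> vec n) :
  (forall eps, 0 < eps ->
     exists N, forall k l, (N <= k <= l)%nat -> sqnorm (vsub (z k) (z l)) <= eps) ->
  exists p, converges z p.
Proof.
  intros Hz.
  assert (Hcoord : forall e, 0 < e -> exists N, forall k l i, (N <= k)%nat -> (N <= l)%nat ->
            Rabs (z k i - z l i) <= e).
  { intros e He. destruct (Hz (e * e)) as [N HN]; [nra|]. exists N. intros k l i Hk Hl.
    destruct (Nat.le_ge_cases k l) as [Hkl|Hlk].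
    - apply (coord_le_of_sqnorm (vsub (z k) (z l))); [lra|apply HN; lia].
    - rewrite Rabs_minus_sym. apply (coord_le_of_sqnorm (vsub (z l) (z k))); [lra|apply HN; lia]. }
  assert (Hcauchy : forall i, Cauchy_crit (fun k => z k i)).
  { intros i eps Heps. destruct (Hcoord (eps / 2)) as [N HN]; [lra|].
    exists N. intros k l Hk Hl. unfold Rdist. pose proof (HN k l i Hk Hl). lra. }
  exists (fun i => proj1_sig (R_complete _ (Hcauchy i))).
  intros eps Heps. set (e := eps / (INR n + 1)).
  assert (Hn : 0 <= INR n) by apply pos_INR.
  assert (He : 0 < e) by (apply Rdiv_lt_0_compat; lra).
  destruct (Hcoord e He) as [N HN]. exists N. intros k Hk.
  assert (Hlim : forall i, Rabs (z k i - proj1_sig (R_complete _ (Hcauchy i))) <= e).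
  { intros i. destruct (R_complete _ (Hcauchy i)) as [p Hp]; simpl.
    apply Rle_plus_epsilon. intros eta Heta. destruct (Hp eta Heta) as [M HM].
    specialize (HM (max N M) ltac:(lia)). unfold Rdist in HM.
    pose proof (HN k (max N M) i Hk ltac:(lia)).
    pose proof (Rabs_triang (z k i - z (max N M) i) (z (max N M) i - p)).
    replace (z k i - z (max N M) i + (z (max N M) i - p)) with (z k i - p) in H0 by ring. lra. }
  apply sqrt_le_of_le_sq; [lra|].
  apply Rle_trans with (INR n * (e * e)).
  - rewrite <- vsum_const. apply vsum_le. intros i. unfold vsub.
    specialize (Hlim i). pose proof (Rabs_pos (z k i - proj1_sig (R_complete _ (Hcauchy i)))).
    rewrite <- (Rabs_pos_eq (_ * _)) by apply Rle_0_sqr. rewrite Rabs_mult. nra.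
  - assert (Heps' : e * (INR n + 1) = eps) by (unfold e; field; lra). nra.
Qed.

Definition sublevel {n} (c : vec n) (Rad : R) (F : vec n -> R) (v : R) (z : vec n) : Prop :=
  cball c Rad z /\ F z <= v.

Lemma sublevel_convex {n} (c : vec n) Rad F v : convex_fun F -> convex (sublevel c Rad F v).
Proof.
  intros HF x y t [Bx Fx] [By Fy] Ht. change (fun i => t * x i + (1 - t) * y i) with (comb t x y).
  split.
  - unfold cball in *. pose proof (dist_comb x y c t Ht). nra.
  - pose proof (HF x y t Ht). nra.
Qed.

Lemma sublevel_closed {n} (c : vec n) Rad F v : lipschitz1 F -> closed_set (sublevel c Rad F v).
Proof.
  intros HF x Hx. split.
  - apply Rle_plus_epsilon. intros eps Heps. destruct (Hx eps Heps) as [u [[Hu _] Hd]].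
    pose proof (dist_triangle x u c). rewrite dist_sym in Hd. unfold cball in *. lra.
  - apply Rle_plus_epsilon. intros eps Heps. destruct (Hx eps Heps) as [u [[_ Hu] Hd]].
    pose proof (HF x u). rewrite dist_sym in Hd. lra.
Qed.

Lemma sublevel_antitone {n} (c : vec n) Rad F v w z :
  v <= w -> sublevel c Rad F v z -> sublevel c Rad F w z.
Proof. intros Hvw [Hz HFz]. split; [exact Hz|lra]. Qed.

Lemma closest_pythagoras {n} (C : vec n -> Prop) q p x : convex C -> is_closest C q p -> C x ->
  sqnorm (vsub q p) + sqnorm (vsub p x) <= sqnorm (vsub q x).
Proof.
  intros HC [Hp Hmin] Hx.
  set (U := sqnorm (vsub q p)). set (D := dot (vsub q p) (vsub x p)). set (E := sqnorm (vsub x p)).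
  assert (Hexp : forall t, sqnorm (vsub q (comb t x p)) = U - 2 * t * D + t * t * E).
  { intros t. unfold U, D, E, sqnorm, dot, vsub, comb.
    rewrite (vsum_lincomb3 n _ (fun i => (q i - p i) * (q i - p i))
               (fun i => (q i - p i) * (x i - p i)) (fun i => (x i - p i) * (x i - p i))
               1 (-2 * t) (t * t)) by (intros; ring).
    ring. }
  assert (HE : 0 <= E) by apply sqnorm_nonneg.
  assert (HD : D <= 0).
  { apply Rnot_lt_le. intros HD. set (t := D / (D + E)).
    assert (Ht : t * (D + E) = D) by (unfold t; field; lra).
    assert (Ht0 : 0 < t) by (unfold t; apply Rdiv_lt_0_compat; lra).
    assert (Ht1 : t <= 1) by nra.
    assert (Hz : C (comb t x p)) by (apply HC; auto; lra).
    pose proof (dist_le_sq _ _ _ (Hmin _ Hz)) as Hle. rewrite Hexp in Hle. fold U in Hle.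
    nra. }
  assert (Hqx : sqnorm (vsub q x) = U - 2 * D + E).
  { replace (U - 2 * D + E) with (U - 2 * 1 * D + 1 * 1 * E) by ring. rewrite <- (Hexp 1).
    unfold sqnorm, dot, vsub, comb. apply vsum_ext; intros; ring. }
  assert (Hpx : sqnorm (vsub p x) = E) by (unfold E, sqnorm, dot, vsub; apply vsum_ext; intros; ring).
  rewrite Hqx, Hpx. lra.
Qed.

Lemma closest_unique {n} (C : vec n -> Prop) q p p' :
  convex C -> is_closest C q p -> is_closest C q p' -> p = p'.
Proof.
  intros HC H1 H2. pose proof (closest_pythagoras C q p p' HC H1 (proj1 H2)).
  pose proof (dist_le_sq _ _ _ (proj2 H2 p (proj1 H1))).
  apply functional_extensionality. intros i.
  pose proof (sqnorm_ge_coord (vsub p p') i). unfold vsub in *. nra.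
Qed.

Lemma parallelogram {n} (q x y : vec n) :
  sqnorm (vsub x y) =
  2 * sqnorm (vsub q x) + 2 * sqnorm (vsub q y) + (-4) * sqnorm (vsub q (comb (1/2) x y)).
Proof. unfold sqnorm, dot, vsub, comb. apply vsum_lincomb3. intros; field. Qed.

Lemma closest_exists {n} (C : vec n -> Prop) (q : vec n) :
  convex C -> closed_set C -> (exists z, C z) -> exists p, is_closest C q p.
Proof.
  intros HC Hcl [z0 Hz0].
  destruct (inf_approx (fun v => exists z, C z /\ v = dist q z) 0) as [m [Hm Happrox]].
  { exists (dist q z0); eauto. }
  { intros v [z [_ ->]]; apply dist_nonneg. }
  assert (Hm0 : 0 <= m).
  { apply Rle_plus_epsilon. intros eps Heps. destruct (Happrox eps Heps) as [v [[z [_ ->]] Hv]].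
    pose proof (dist_nonneg q z). lra. }
  assert (Hseq : forall k : nat, exists z, C z /\ dist q z <= m + / (INR k + 1)).
  { intros k. destruct (inv_succ_bounds k k (le_n k)) as [Hpos _].
    destruct (Happrox _ Hpos) as [v [[z [Hz ->]] Hv]]. exists z; split; [exact Hz|lra]. }
  destruct (functional_choice _ Hseq) as [z Hz].
  assert (Hcauchy : forall k l, (k <= l)%nat ->
            sqnorm (vsub (z k) (z l)) <= (8 * m + 4) * / (INR k + 1)).
  { intros k l Hkl. destruct (Hz k) as [Ck Dk]. destruct (Hz l) as [Cl Dl].
    assert (Hmid : m <= dist q (comb (1/2) (z k) (z l))).
    { apply Hm. exists (comb (1/2) (z k) (z l)). split; [apply HC; auto; lra|reflexivity]. }
    rewrite (parallelogram q), <- !dist_sq.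
    destruct (inv_succ_bounds k l Hkl) as [El [Elk Ek]].
    pose proof (dist_nonneg q (z k)). pose proof (dist_nonneg q (z l)). nra. }
  destruct (cauchy_converges z) as [p Hp].
  { intros eps Heps. destruct (inv_succ_small (8 * m + 4) eps) as [N HN]; [lra|exact Heps|].
    exists N. intros k l [Hk Hkl]. eapply Rle_trans; [apply Hcauchy; exact Hkl|apply HN; exact Hk]. }
  exists p. split.
  { apply (closed_set_limit C z p Hcl); [exists 0%nat; intros k _; apply Hz|exact Hp]. }
  intros w Hw.
  enough (dist q p <= m) by (pose proof (Hm _ (ex_intro _ w (conj Hw eq_refl))); lra).
  apply Rle_plus_epsilon; intros eps Heps.
  destruct (Hp (eps / 2)) as [N1 HN1]; [lra|].
  destruct (inv_succ_small 1 (eps / 2)) as [N2 HN2]; [lra|lra|].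
  specialize (HN1 (max N1 N2) ltac:(lia)). specialize (HN2 (max N1 N2) ltac:(lia)).
  destruct (Hz (max N1 N2)) as [_ Dk]. pose proof (dist_triangle q (z (max N1 N2)) p). lra.
Qed.

Lemma nested_closest_converges {n} (K : nat -> vec n -> Prop) (q : vec n) (p : nat -> vec n) B :
  (forall k, convex (K k)) -> (forall k l z, (k <= l)%nat -> K l z -> K k z) ->
  (forall k, is_closest (K k) q (p k)) -> (forall k, sqnorm (vsub q (p k)) <= B) ->
  exists p', converges p p'.
Proof.
  intros Hconv Hnest Hp HB. set (a := fun k => sqnorm (vsub q (p k))).
  assert (Hgap : forall k l, (k <= l)%nat -> a k + sqnorm (vsub (p k) (p l)) <= a l).
  { intros k l Hkl. apply (closest_pythagoras (K k)); [apply Hconv|apply Hp|].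
    apply (Hnest k l _ Hkl), Hp. }
  assert (Hgrow : Un_growing a).
  { intros k. pose proof (Hgap k (S k) (Nat.le_succ_diag_r k)).
    pose proof (sqnorm_nonneg (vsub (p k) (p (S k)))). lra. }
  destruct (growing_cv a Hgrow) as [L HL]; [exists B; intros x [k ->]; apply HB|].
  apply cauchy_converges. intros eps Heps. destruct (HL eps Heps) as [N HN].
  exists N. intros k l [Hk Hkl]. specialize (HN k Hk). unfold Rdist in HN.
  pose proof (Hgap k l Hkl). pose proof (growing_ineq a L Hgrow HL l).
  pose proof (Rle_abs (L - a k)). rewrite Rabs_minus_sym in HN. lra.
Qed.

(* The minimiser is the limit of the projections of [c] onto the sublevel sets at
   levels decreasing to the infimum. *)
Lemma min_exists_ball {n} (c : vec n) Rad F : 0 <= Rad -> lipschitz1 F -> convex_fun F ->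
  exists d, is_min_val (cball c Rad) F d.
Proof.
  intros HR Hlip Hconv.
  destruct (inf_approx (fun v => exists z, cball c Rad z /\ v = F z) (F c - Rad)) as [m [Hm Happrox]].
  { exists (F c), c. split; [apply cball_center; exact HR|reflexivity]. }
  { intros v [z [Hz ->]]. pose proof (Hlip c z). rewrite dist_sym in H. unfold cball in Hz. lra. }
  set (K := fun k : nat => sublevel c Rad F (m + / (INR k + 1))).
  assert (Hnest : forall k l z, (k <= l)%nat -> K l z -> K k z).
  { intros k l z Hkl. apply sublevel_antitone. destruct (inv_succ_bounds k l Hkl). lra. }
  assert (Hproj : forall k, exists p, is_closest (K k) c p).
  { intros k. apply closest_exists.
    - apply sublevel_convex, Hconv.
    - apply sublevel_closed, Hlip.
    - destruct (inv_succ_bounds k k (le_n k)) as [Hpos _].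
      destruct (Happrox _ Hpos) as [v [[z [Hz ->]] Hv]]. exists z. split; [exact Hz|lra]. }
  destruct (functional_choice _ Hproj) as [p Hp].
  destruct (nested_closest_converges K c p (Rad * Rad)) as [p' Hp'].
  - intros k. apply sublevel_convex, Hconv.
  - exact Hnest.
  - exact Hp.
  - intros k. destruct (Hp k) as [[Hb _] _]. unfold cball in Hb. rewrite <- dist_sq, dist_sym.
    pose proof (dist_nonneg (p k) c). nra.
  - assert (HK : forall k, K k p').
    { intros k. apply (closed_set_limit (K k) p p'); [apply sublevel_closed, Hlip| |exact Hp'].
      exists k. intros l Hl. apply (Hnest k l _ Hl), Hp. }
    exists (F p'). split; [exists p'; split; [apply (HK 0%nat)|reflexivity]|].
    intros z Hz. enough (F p' <= m) by (pose proof (Hm _ (ex_intro _ z (conj Hz eq_refl))); lra).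
    apply Rle_plus_epsilon. intros eps Heps.
    destruct (inv_succ_small 1 eps) as [N HN]; [lra|exact Heps|].
    destruct (HK N) as [_ HFp]. specialize (HN N (le_n N)). lra.
Qed.

Lemma min_val_unique {n} (E : vec n -> Prop) (F : vec n -> R) d1 d2 :
  is_min_val E F d1 -> is_min_val E F d2 -> d1 = d2.
Proof.
  intros [[x1 [E1 F1]] H1] [[x2 [E2 F2]] H2].
  specialize (H1 x2 E2). specialize (H2 x1 E1). lra.
Qed.

Lemma segment_start (Q : nat -> Prop) T : (1 <= T)%nat -> Q T ->
  exists t0, (1 <= t0 <= T)%nat /\ Q t0 /\ (t0 = 1%nat \/ ~ Q (t0 - 1)%nat).
Proof.
  induction T as [|T IH]; intros HT HQ; [lia|].
  destruct (Nat.eq_dec T 0) as [->|HT0]; [exists 1%nat; auto|].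
  destruct (classic (Q T)) as [HQT|HQT].
  - destruct (IH ltac:(lia) HQT) as [t0 [Ht0 Hrest]]. exists t0. split; [lia|exact Hrest].
  - exists (S T). split; [lia|split; [exact HQ|right]]. rewrite Nat.sub_1_r. exact HQT.
Qed.

(* Cut [1..T] at the first index after which [D] stays within a factor 2 of [D T];
   before the cut [|D|] is more than twice as large, so induction costs a factor 1/4. *)
Lemma halving_count (D : nat -> R) A steps :
  (forall t, (1 <= t <= steps)%nat -> D t <= 0 /\ D t * D t <= A) ->
  (forall t0 T, (1 <= t0 <= T)%nat -> (T <= steps)%nat -> D T <= D t0 / 2 ->
     (INR T - INR t0) * (D T * D T) <= 16 * A) ->
  forall T, (1 <= T <= steps)%nat -> INR T * (D T * D T) <= 32 * A.
Proof.
  intros HD Hphase T. induction T as [T IH] using (well_founded_ind lt_wf). intros HT.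
  destruct (HD T HT) as [HT0 HTA].
  destruct (segment_start (fun t => D T <= D t / 2) T) as [t0 [Ht0 [Hhalf Hfirst]]]; [lia|lra|].
  pose proof (Hphase t0 T Ht0 (proj2 HT) Hhalf) as Hlast.
  assert (Hsq : 0 <= D T * D T) by apply Rle_0_sqr.
  destruct (Nat.eq_dec t0 1) as [-> | Ht01]; [simpl INR in Hlast; lra|].
  destruct Hfirst as [Hone | Hbefore]; [lia|].
  assert (Hprev : INR (t0 - 1) * (D (t0 - 1)%nat * D (t0 - 1)%nat) <= 32 * A) by (apply IH; lia).
  rewrite minus_INR in Hprev by lia. simpl INR in Hprev.
  assert (Hdouble : 4 * (D T * D T) <= D (t0 - 1)%nat * D (t0 - 1)%nat) by nra.
  assert (Ht0R : 1 <= INR t0) by (apply (le_INR 1); lia).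
  assert ((INR t0 - 1) * (4 * (D T * D T)) <= 32 * A) by nra.
  nra.
Qed.

Section BundleLevel.
Variables (n : nat) (c ystar : vec n) (Rad rho : R) (Ys : vec n -> Prop).
Variables (y g : nat -> vec n) (b : nat -> R) (steps : nat).
Hypothesis HRad : 0 < Rad.
Hypothesis Hrho : 0 < rho.
Hypothesis HYs : forall z, Ys z -> cball c Rad z.
Hypothesis Hstar : forall z, cball ystar rho z -> Ys z.
Hypothesis Hrun : BL_run c Rad Ys y g b steps.

Lemma run_separator s : (1 <= s <= steps)%nat -> separator Ys (y s) (g s) (b s).
Proof. apply Hrun. Qed.

Lemma fmax_run_lipschitz s : (1 <= s <= steps)%nat -> lipschitz1 (fmax g b s).
Proof. intros Hs. apply fmax_lipschitz; [lia|]. intros r Hr. apply run_separator; lia. Qed.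

Lemma ystar_in_ball : cball c Rad ystar.
Proof. apply HYs, Hstar, cball_center; lra. Qed.

Lemma fmax_run_ystar s : (1 <= s <= steps)%nat -> fmax g b s ystar <= - rho.
Proof.
  intros Hs. apply fmax_le; [lia|]. intros r Hr. destruct (run_separator r ltac:(lia)) as [Hg [_ Hneg]].
  apply aff_nonpos_ball_center; [exact Hrho|exact Hg|]. intros z Hz. apply Hneg, Hstar, Hz.
Qed.

Lemma min_val_exists s : (1 <= s <= steps)%nat -> exists d, is_min_val (cball c Rad) (fmax g b s) d.
Proof. intros Hs. apply min_exists_ball; [lra|apply fmax_run_lipschitz, Hs|apply fmax_convex]. Qed.

Lemma min_val_le_neg_rho s d : (1 <= s <= steps)%nat ->
  is_min_val (cball c Rad) (fmax g b s) d -> d <= - rho.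
Proof. intros Hs [_ Hd]. pose proof (Hd ystar ystar_in_ball). pose proof (fmax_run_ystar s Hs). lra. Qed.

(* [f^s >= f_1], [f_1(c) >= 0] and [f_1] is 1-Lipschitz. *)
Lemma min_val_ge_neg_Rad s d : (1 <= s <= steps)%nat ->
  is_min_val (cball c Rad) (fmax g b s) d -> - Rad <= d.
Proof.
  intros Hs [[x [Hx <-]] _]. pose proof (aff_le_fmax g b 1 s x ltac:(lia)).
  destruct (run_separator 1 ltac:(lia)) as [Hg1 [Hpos _]]. pose proof Hrun as [Hy1 _].
  rewrite Hy1 in Hpos. pose proof (aff_lipschitz (g 1%nat) (b 1%nat) Hg1 c x).
  rewrite dist_sym in H0. unfold cball in Hx. lra.
Qed.

Lemma level_set_convex s d : convex (level_set c Rad (fmax g b s) d).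
Proof. apply sublevel_convex, fmax_convex. Qed.

Lemma level_set_closest_exists s d : (1 <= s <= steps)%nat ->
  is_min_val (cball c Rad) (fmax g b s) d ->
  exists p, is_closest (level_set c Rad (fmax g b s) d) (y s) p.
Proof.
  intros Hs Hd. apply closest_exists.
  - apply level_set_convex.
  - apply sublevel_closed, fmax_run_lipschitz, Hs.
  - pose proof (min_val_le_neg_rho s d Hs Hd). destruct Hd as [[x [Hx Fx]] _].
    exists x. split; [exact Hx|lra].
Qed.

Lemma levels_well_defined s : (1 <= s <= steps)%nat ->
  (exists d, is_min_val (cball c Rad) (fmax g b s) d /\ d <= - rho) /\
  (forall d, is_min_val (cball c Rad) (fmax g b s) d ->
     (exists p, is_closest (level_set c Rad (fmax g b s) d) (y s) p) /\
     (forall p q, is_closest (level_set c Rad (fmax g b s) d) (y s) p ->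
                  is_closest (level_set c Rad (fmax g b s) d) (y s) q -> p = q)).
Proof.
  intros Hs. split.
  - destruct (min_val_exists s Hs) as [d Hd]. exists d. split; [exact Hd|].
    exact (min_val_le_neg_rho s d Hs Hd).
  - intros d Hd. split; [exact (level_set_closest_exists s d Hs Hd)|].
    intros p q. apply closest_unique, level_set_convex.
Qed.

Definition Delta t : R := epsilon (inhabits 0) (is_min_val (cball c Rad) (fmax g b t)).

Lemma Delta_spec t : (1 <= t <= steps)%nat -> is_min_val (cball c Rad) (fmax g b t) (Delta t).
Proof. intros Ht. unfold Delta. apply epsilon_spec, min_val_exists, Ht. Qed.

Lemma Delta_bounds t : (1 <= t <= steps)%nat -> - Rad <= Delta t <= - rho.
Proof.
  intros Ht. split; [apply (min_val_ge_neg_Rad t)|apply (min_val_le_neg_rho t)];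
    (exact Ht || apply Delta_spec, Ht).
Qed.

Lemma Delta_mono t t' : (1 <= t <= t')%nat -> (t' <= steps)%nat -> Delta t <= Delta t'.
Proof.
  intros Ht Ht'. destruct (Delta_spec t' ltac:(lia)) as [[x [Hx <-]] _].
  destruct (Delta_spec t ltac:(lia)) as [_ Hmin].
  pose proof (Hmin x Hx). pose proof (fmax_mono g b t t' x (proj2 Ht)). lra.
Qed.

Lemma y_next_closest t : (1 <= t)%nat -> (S t <= steps)%nat ->
  is_closest (level_set c Rad (fmax g b t) (Delta t)) (y t) (y (S t)).
Proof.
  intros Ht Ht'. pose proof Hrun as [_ [_ Hstep]].
  destruct (Hstep (S t) ltac:(lia)) as [d [Hd Hcl]]. rewrite Nat.sub_1_r in Hd, Hcl.
  rewrite <- (min_val_unique _ _ _ _ Hd (Delta_spec t ltac:(lia))). exact Hcl.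
Qed.

Lemma y_in_ball t : (1 <= t <= steps)%nat -> cball c Rad (y t).
Proof.
  intros Ht. destruct t as [|[|t]]; [lia| |].
  - pose proof Hrun as [-> _]. apply cball_center; lra.
  - apply (y_next_closest (S t)); lia.
Qed.

(* [f_t(y t) >= 0] while [f_t(y (t+1)) <= Delta t / 2 < 0], and [f_t] is 1-Lipschitz. *)
Lemma step_sqlength t : (1 <= t)%nat -> (S t <= steps)%nat ->
  Delta t * Delta t / 4 <= sqnorm (vsub (y t) (y (S t))).
Proof.
  intros Ht Ht'. destruct (run_separator t ltac:(lia)) as [Hg [Hpos _]].
  destruct (y_next_closest t Ht Ht') as [[_ Hlevel] _].
  pose proof (aff_le_fmax g b t t (y (S t)) ltac:(lia)).
  pose proof (aff_lipschitz (g t) (b t) Hg (y t) (y (S t))).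
  pose proof (proj2 (Delta_bounds t ltac:(lia))). rewrite <- dist_sq.
  pose proof (dist_nonneg (y t) (y (S t))). nra.
Qed.

(* [x] lies in every level set [L_t] with [t0 <= t < T], since [f^t <= f^T] and
   [Delta T <= Delta t0 / 2 <= Delta t / 2]. *)
Lemma approach_minimizer x t0 T : (1 <= t0 <= T)%nat -> (T <= steps)%nat ->
  cball c Rad x -> fmax g b T x = Delta T -> Delta T <= Delta t0 / 2 ->
  forall j, (t0 + j <= T)%nat ->
  INR j * (Delta T * Delta T) / 4 + sqnorm (vsub (y (t0 + j)%nat) x) <= sqnorm (vsub (y t0) x).
Proof.
  intros Ht0 HT Hx Fx Hhalf. induction j as [|j IH]; intros Hj.
  - rewrite Nat.add_0_r. simpl INR. lra.
  - specialize (IH ltac:(lia)). rewrite Nat.add_succ_r. set (t := (t0 + j)%nat) in *.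
    assert (Hxlevel : level_set c Rad (fmax g b t) (Delta t) x).
    { split; [exact Hx|]. pose proof (fmax_mono g b t T x ltac:(lia)).
      pose proof (Delta_mono t0 t ltac:(lia) ltac:(lia)). lra. }
    pose proof (closest_pythagoras _ _ _ _ (level_set_convex t (Delta t))
                  (y_next_closest t ltac:(lia) ltac:(lia)) Hxlevel).
    pose proof (step_sqlength t ltac:(lia) ltac:(lia)).
    pose proof (Delta_mono t T ltac:(lia) HT). pose proof (proj2 (Delta_bounds T ltac:(lia))).
    assert (Delta T * Delta T <= Delta t * Delta t) by nra.
    rewrite S_INR. nra.
Qed.

Lemma halving_phase t0 T : (1 <= t0 <= T)%nat -> (T <= steps)%nat -> Delta T <= Delta t0 / 2 ->
  (INR T - INR t0) * (Delta T * Delta T) <= 16 * (Rad * Rad).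
Proof.
  intros Ht0 HT Hhalf. destruct (Delta_spec T ltac:(lia)) as [[x [Hx Fx]] _].
  pose proof (approach_minimizer x t0 T Ht0 HT Hx Fx Hhalf (T - t0) ltac:(lia)) as Happ.
  rewrite Nat.add_comm, Nat.sub_add, minus_INR in Happ by lia.
  pose proof (cball_sqdist c (y t0) x Rad (y_in_ball t0 ltac:(lia)) Hx).
  pose proof (sqnorm_nonneg (vsub (y T) x)). lra.
Qed.

Lemma iteration_bound : INR steps <= 32 * Rad ^ 2 / rho ^ 2.
Proof.
  destruct (Nat.eq_dec steps 0) as [-> | Hsteps].
  { simpl INR. apply Rmult_le_pos; [nra|]. apply Rlt_le, Rinv_0_lt_compat. nra. }
  assert (Hcount : INR steps * (Delta steps * Delta steps) <= 32 * (Rad * Rad)).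
  { apply (halving_count Delta (Rad * Rad) steps); [| |lia].
    - intros t Ht. destruct (Delta_bounds t Ht). split; nra.
    - intros t0 T Ht0 HT. apply halving_phase; assumption. }
  destruct (Delta_bounds steps ltac:(lia)). pose proof (pos_INR steps).
  apply Rmult_le_reg_r with (rho ^ 2); [nra|].
  replace (32 * Rad ^ 2 / rho ^ 2 * rho ^ 2) with (32 * (Rad * Rad)) by (field; lra).
  assert (rho ^ 2 <= Delta steps * Delta steps) by nra.
  nra.
Qed.

End BundleLevel.

Theorem proposition1 (n : nat) (c : vec n) (Rad rho : R) (ystar : vec n)
  (Ys : vec n -> Prop) (y g : nat -> vec n) (b : nat -> R) (S : nat) :
  0 < Rad -> 0 < rho ->
  convex Ys ->
  (forall z, Ys z -> cball c Rad z) ->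
  (forall z, cball ystar rho z -> Ys z) ->
  BL_run c Rad Ys y g b S ->
  (forall s, (1 <= s <= S)%nat ->
     (exists d, is_min_val (cball c Rad) (fmax g b s) d /\ d <= - rho) /\
     (forall d, is_min_val (cball c Rad) (fmax g b s) d ->
        (exists p, is_closest (level_set c Rad (fmax g b s) d) (y s) p) /\
        (forall p q, is_closest (level_set c Rad (fmax g b s) d) (y s) p ->
                     is_closest (level_set c Rad (fmax g b s) d) (y s) q -> p = q)))
  /\ INR S <= 32 * Rad ^ 2 / rho ^ 2.
Proof.
  intros HRad Hrho _ HYs Hstar Hrun. split.
  - intros s. eapply levels_well_defined; eassumption.
  - eapply iteration_bound; eassumption.
Qed.
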